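(* Let $k$ be a positive integer and let $\mathcal{A}$ be a family of $3$-element subsets of $[k]=\{1,\dots,k\}$ with the following property: whenever $[k]=R_1\cup R_2\cup R_3$ is a partition of $[k]$ into three non-empty sets, there exists $A\in\mathcal{A}$ with $A\cap R_i\neq\emptyset$ for $i=1,2,3$. Then $|\mathcal{A}|\geq \frac{k(k-2)}{3}$. *)

From mathcomp Require Import all_boot all_order all_algebra.
Set Implicit Arguments. Unset Strict Implicit. Unset Printing Implicit Defensive.

Definition partition3 (k : nat) (R1 R2 R3 : {set 'I_k}) : Prop :=
  [/\ R1 != set0, R2 != set0 & R3 != set0] /\
  [/\ [disjoint R1 & R2], [disjoint R1 & R3], [disjoint R2 & R3]
    & R1 :|: R2 :|: R3 = setT].

From mathcomp Require Import all_boot all_order all_algebra.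
From mathcomp Require Import zify.

Set Implicit Arguments.
Unset Strict Implicit.
Unset Printing Implicit Defensive.

(* Every point x lies in at least k - 2 triples of the family.  Otherwise the
   link of x, the graph on [k] \ {x} whose edges are the pairs A \ {x} for the
   triples A through x, has at most k - 3 edges on k - 1 vertices and is
   therefore disconnected.  A union S of its components that is neither empty
   nor everything then yields the partition {x}, S, [k] \ ({x} u S), and a
   triple meeting all three parts would give an edge of the link leaving S.
   Double counting the incidences gives 3 |F| >= k (k - 2). *)

Lemma sparse_graph_cut (T : finType) (E : seq (T * T)) (V : {set T}) :
  size E + 2 <= #|V| ->
  exists2 S : {set T}, S != set0 /\ S \proper V &
    {in E, forall p, p.1 \in V -> p.2 \in V -> (p.1 \in S) = (p.2 \in S)}.
Proof.
move: {2}(size E) (erefl (size E)) => n.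
elim: n E V => [|n IH] [|[u w] E] V //= => [_|[sizeE]] hV.
  have /card_gt0P[v vV] : 0 < #|V| by apply: leq_trans hV.
  exists [set v] => //; split; first by apply/set0Pn; exists v; rewrite set11.
  by rewrite properEcard sub1set vV cards1; apply: leq_trans hV.
have [edgeV|loopV] := boolP [&& u \in V, w \in V & u != w]; last first.
  have [S nontrivS cutS] := IH E V sizeE (ltnW hV).
  exists S => // p; rewrite inE => /orP[/eqP -> /= uV wV|]; last exact: cutS.
  by move: loopV; rewrite uV wV negbK => /eqP ->.
case/and3P: edgeV => uV wV uw.
(* Contract the edge uw: w is merged into u. *)
pose g x := if x == w then u else x.
have gV x : x \in V -> g x \in V :\ w.
  by rewrite /g; case: eqP => [_ _|/eqP xw xV]; rewrite !inE ?xw ?uw ?uV.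
have hV' : size (map (fun p => (g p.1, g p.2)) E) + 2 <= #|V :\ w|.
  by move: hV; rewrite size_map (cardsD1 w V) wV addSn add1n ltnS.
have [S' [S'0 S'V] cutS'] := IH _ _ (etrans (size_map _ _) sizeE) hV'.
have S'sub : S' \subset V :\ w by apply: proper_sub.
have wS' : w \notin S' by apply/negP => /(subsetP S'sub); rewrite !inE eqxx.
pose S := if u \in S' then w |: S' else S'.
have inS x : x \in V -> (x \in S) = (g x \in S').
  move=> _; rewrite /S /g; case: eqP => [->|/eqP xw].
    by case: ifP => uS'; rewrite ?setU11 // (negbTE wS').
  by case: ifP; rewrite ?inE ?(negbTE xw).
exists S; last first.
  move=> p; rewrite inE => /orP[/eqP -> /= uV' wV'|pE p1V p2V].
    by rewrite !inS // /g eqxx (negbTE uw).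
  by rewrite !inS //; apply: (cutS' (g p.1, g p.2)); rewrite ?gV //; apply: map_f.
have SV : S \subset V.
  have S'V' : S' \subset V := subset_trans S'sub (subD1set _ _).
  by rewrite /S; case: ifP; rewrite // subUset sub1set wV.
split.
  case/set0Pn: S'0 => v vS'; apply/set0Pn; exists v.
  by rewrite /S; case: ifP; rewrite ?inE ?vS' ?orbT.
rewrite properEneq SV andbT; apply/eqP => SVeq.
case/properP: S'V => _ [v]; rewrite !inE => /andP[vw vV] vS'.
by move: (inS v vV); rewrite SVeq vV /g (negbTE vw) (negbTE vS').
Qed.

Lemma sum_card_incident (T : finType) (F : {set {set T}}) :
  \sum_(x : T) #|[set A in F | x \in A]| = \sum_(A in F) #|A|.
Proof.
transitivity (\sum_(x : T) \sum_(A in F) (x \in A : nat)).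
  apply: eq_bigr => x _; rewrite -sum1_card big_mkcond [RHS]big_mkcond.
  by apply: eq_bigr => A _; rewrite !inE; case: (A \in F); case: (x \in A).
by rewrite exchange_big; apply: eq_bigr => A _; rewrite -sum1_card [RHS]big_mkcond.
Qed.

(* [pair_of x0 D] lists the two elements of a two-element set [D]; the default
   [x0] is never used in that case. *)
Definition pair_of (T : finType) (x0 : T) (D : {set T}) : T * T :=
  (nth x0 (enum D) 0, nth x0 (enum D) 1).

Lemma pair_ofE (T : finType) (x0 : T) (D : {set T}) :
  #|D| = 2 -> D = [set (pair_of x0 D).1; (pair_of x0 D).2].
Proof.
rewrite cardE /pair_of => sizeD; apply/setP => a.
rewrite -mem_enum !inE; move: sizeD.
by case: (enum D) => [|p1 [|p2 []]] //= _; rewrite !inE.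
Qed.

Lemma partition3_point_cut (k : nat) (x : 'I_k) (S : {set 'I_k}) :
  S != set0 -> S \proper [set~ x] ->
  partition3 [set x] S ([set~ x] :\: S).
Proof.
move=> S0 Sx; have Sx' : S \subset [set~ x] by apply: proper_sub.
have xS : x \notin S by apply/negP => /(subsetP Sx'); rewrite !inE eqxx.
split; split.
- by apply/set0Pn; exists x; rewrite set11.
- by [].
- by move: Sx; rewrite properE setD_eq0 => /andP[].
- by rewrite disjoints1.
- by rewrite disjoints1 !inE eqxx andbF.
- by rewrite disjoints_subset; apply/subsetP => y yS; rewrite !inE yS.
- apply/setP => y; rewrite !inE.
  by case: eqP => [->|_] //=; rewrite ?(negbTE xS) //; case: (y \in S).
Qed.

Section TripleCover.

Variables (k : nat) (F : {set {set 'I_k}}).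
Hypothesis F_triples : forall A, A \in F -> #|A| = 3.
Hypothesis F_cover : forall R1 R2 R3 : {set 'I_k}, partition3 R1 R2 R3 ->
  exists2 A, A \in F &
    [/\ A :&: R1 != set0, A :&: R2 != set0 & A :&: R3 != set0].

Lemma card_incident_ge (x : 'I_k) : k - 2 <= #|[set A in F | x \in A]|.
Proof.
rewrite leqNgt; apply/negP => few.
pose E := [seq pair_of x (A :\ x) | A <- enum [set A in F | x \in A]].
have sizeE : size E + 2 <= #|[set~ x]|.
  move: few; rewrite size_map -cardE cardsC1 card_ord -subn1; set c := #|_|; lia.
have [S [S0 Sx] cutS] := sparse_graph_cut sizeE.
have [A AF [Ax AS AnS]] := F_cover (partition3_point_cut S0 Sx).
have xA : x \in A by case/set0Pn: Ax => y; rewrite !inE => /andP[yA /eqP <-].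
have linkA : A :\ x = [set (pair_of x (A :\ x)).1; (pair_of x (A :\ x)).2].
  by apply: pair_ofE; move: (cardsD1 x A); rewrite xA (F_triples AF) => -[].
have linkV y : y \in A :\ x -> y \in [set~ x] by rewrite !inE => /andP[].
set p := pair_of x (A :\ x) in linkA.
have pE : p \in E by apply: map_f; rewrite mem_enum !inE AF xA.
have p1A : p.1 \in A :\ x by rewrite linkA set21.
have p2A : p.2 \in A :\ x by rewrite linkA set22.
have cut_p := cutS p pE (linkV _ p1A) (linkV _ p2A).
case/set0Pn: AS => a /setIP[aA aS].
case/set0Pn: AnS => b /setIP[bA /setDP[bx bS]]; rewrite !inE in bx.
have ax : a != x by rewrite -in_setC1; apply: (subsetP (proper_sub Sx)).
have aAx : a \in A :\ x by rewrite !inE ax aA.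
have bAx : b \in A :\ x by rewrite !inE bx bA.
move: aAx bAx aS bS; rewrite linkA !inE.
by case/orP=> /eqP-> /orP[]/eqP->; rewrite ?cut_p => ->.
Qed.

Lemma card_incidences_ge : k * (k - 2) <= 3 * #|F|.
Proof.
have -> : 3 * #|F| = \sum_(A in F) #|A|.
  by rewrite (eq_bigr (fun _ => 3)) ?sum_nat_const 1?mulnC // => A /F_triples.
rewrite -sum_card_incident -[k in k * _]card_ord -sum_nat_const.
by apply: leq_sum => x _; apply: card_incident_ge.
Qed.

End TripleCover.

Import Order.TTheory GRing.Theory Num.Theory.
Local Open Scope ring_scope.

Theorem lemma1 (k : nat) (hk : (0 < k)%N) (F : {set {set 'I_k}})
  (h3 : forall A, A \in F -> #|A| = 3%N)
  (hcov : forall R1 R2 R3 : {set 'I_k}, partition3 R1 R2 R3 ->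
     exists2 A, A \in F &
       [/\ A :&: R1 != set0, A :&: R2 != set0 & A :&: R3 != set0]) :
  (k%:R * (k%:R - 2)) / 3 <= (#|F|%:R : rat).
Proof.
have natr_sub2 : k%:R - 2 <= (k - 2)%N%:R :> rat.
  have [k2|k1] := leqP 2 k; first by rewrite natrB.
  by move/ltnW: (k1); rewrite -subn_eq0 => /eqP->; rewrite subr_le0 ler_nat ltnW.
rewrite ler_pdivrMr // -natrM mulnC.
apply: le_trans (_ : (k * (k - 2))%N%:R <= _); last first.
  by rewrite ler_nat; apply: card_incidences_ge.
by rewrite natrM ler_wpM2l.
Qed.
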